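(* For every graph $G$, $\psi(G)\le\gamma_M(G)+\gamma(G)$.
   Context: All graphs are finite, simple, undirected and connected, with at least 2 vertices; $d(u,v)$ is the shortest-path distance. A set $S\subseteq V(G)$ is resolving if for all distinct $x,y$ there is $u\in S$ with $d(u,x)\ne d(u,y)$. $S$ is dominating if every vertex not in $S$ has a neighbor in $S$; $\gamma(G)$ is its minimum size. An MLD-set is a set both resolving and dominating; $\gamma_M(G)$ is its minimum size. A doubly resolving set is a set $S$ such that for every pair of distinct vertices $x,y$ there are $u,v\in S$ with $d(u,x)-d(u,y)\ne d(v,x)-d(v,y)$; $\psi(G)$ is its minimum size. *)

From mathcomp Require Import all_boot all_order all_algebra.
Set Implicit Arguments. Unset Strict Implicit. Unset Printing Implicit Defensive.

Definition simple_graph (T : finType) (e : rel T) : Prop :=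
  irreflexive e /\ symmetric e.

Definition connected_graph (T : finType) (e : rel T) : Prop :=
  forall x y : T, connect e x y.

Fixpoint ball (T : finType) (e : rel T) (k : nat) (x : T) : {set T} :=
  match k with
  | 0 => [set x]
  | k'.+1 => ball e k' x :|: [set z | [exists w in ball e k' x, e w z]]
  end.

(* shortest-path distance: least k with y in ball k x (k < #|T| suffices
   in a connected graph; otherwise returns #|T|). *)
Definition dist (T : finType) (e : rel T) (x y : T) : nat :=
  find (fun k => y \in ball e k x) (iota 0 #|T|).

Definition resolving (T : finType) (e : rel T) (S : {set T}) : bool :=
  [forall x : T, forall y : T, (x != y) ==>
     [exists u in S, dist e u x != dist e u y]].

Definition dominating (T : finType) (e : rel T) (S : {set T}) : bool :=
  [forall x : T, (x \notin S) ==> [exists u in S, e x u]].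

Definition mld_set (T : finType) (e : rel T) (S : {set T}) : bool :=
  resolving e S && dominating e S.

Definition doubly_resolving (T : finType) (e : rel T) (S : {set T}) : bool :=
  [forall x : T, forall y : T, (x != y) ==>
     [exists u in S, exists v in S,
        ((dist e u x)%:Z - (dist e u y)%:Z != (dist e v x)%:Z - (dist e v y)%:Z)%R]].

(* minimum cardinality of a set satisfying P (default #|T|, attained by setT
   for all properties below when the graph has >= 2 vertices). *)
Definition min_card (T : finType) (P : {set T} -> bool) : nat :=
  \big[minn/#|T|]_(S : {set T} | P S) #|S|.

Definition domination_number (T : finType) (e : rel T) : nat :=
  min_card (dominating e).
Definition mld_number (T : finType) (e : rel T) : nat :=
  min_card (mld_set e).
Definition doubly_resolving_number (T : finType) (e : rel T) : nat :=
  min_card (doubly_resolving e).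

From mathcomp Require Import all_boot all_order all_algebra zify.
Set Implicit Arguments. Unset Strict Implicit. Unset Printing Implicit Defensive.

(* Let S be a minimum MLD-set and D a minimum dominating set. Call x "one step
   behind" y when x is adjacent to y and d(u,x) = d(u,y) + 1 for every u in S;
   since S is resolving, each y has at most one vertex behind it. Adding to
   S ∪ D the vertices lying behind some y in S ∩ D costs at most |S ∩ D|, so the
   resulting set W has at most |S| + |D| elements. W is doubly resolving: if x, y
   were not doubly resolved, d(u,x) - d(u,y) would be a constant c > 0 on W
   (after swapping, as S is resolving). Then x is not in W, and any neighbour of
   x in W must be y with c = 1. Domination by S forces y in S, so x lies behind
   y; domination by D then forces y in D, which puts x in W. *)

Section Distance.
Variables (T : finType) (e : rel T).

Lemma dist_xx x : dist e x x = 0.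
Proof. by rewrite /dist; case: #|T| => [|n] //=; rewrite set11. Qed.

Lemma dist_eq0 u x : dist e u x = 0 -> u = x.
Proof.
rewrite /dist; have : 0 < #|T| by apply/card_gt0P; exists x.
case: #|T| => [|n] //= _.
by case: ifP => // /[swap] _; rewrite inE => /eqP.
Qed.

Lemma dist_edge u x : u != x -> e u x -> dist e u x = 1.
Proof.
move=> nux eux; rewrite /dist.
have : 1 < #|T| by rewrite (cardD1 u) (cardD1 x) !inE eq_sym nux.
case: #|T| => [|[|n]] //= _.
rewrite !inE eq_sym (negbTE nux) /=.
suff -> : [exists w in [set u], e w x] by [].
by apply/exists_inP; exists u; rewrite ?set11.
Qed.

Lemma resolving_setT : resolving e [set: T].
Proof.
apply/forallP => x; apply/forallP => y; apply/implyP => nxy.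
apply/exists_inP; exists x; rewrite ?inE // dist_xx.
by apply: contra nxy => /eqP/esym/dist_eq0 ->.
Qed.

Lemma dominating_setT : dominating e [set: T].
Proof. by apply/forallP => x; rewrite inE. Qed.

End Distance.

Section MinCard.
Variables (T : finType) (P : {set T} -> bool).

Lemma min_card_le S : P S -> min_card P <= #|S|.
Proof.
move=> PS; rewrite /min_card.
have : S \in index_enum {set T} by rewrite mem_index_enum.
elim: (index_enum _) => //= A r IH; rewrite inE big_cons.
case/orP => [/eqP<-|/IH le_S]; first by rewrite PS geq_minl.
by case: ifP => _ //; apply: leq_trans (geq_minr _ _) le_S.
Qed.

Lemma min_card_attained : P setT -> exists2 S, P S & min_card P = #|S|.
Proof.
move=> PT; rewrite /min_card.
apply: (big_ind (fun n => exists2 S, P S & n = #|S|)).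
- by exists setT; rewrite ?cardsT.
- move=> a b [A PA ->] [B PB ->].
  case: (leqP #|A| #|B|) => [le_AB | /ltnW le_BA].
  + by exists A; rewrite ?(minn_idPl le_AB).
  + by exists B; rewrite ?(minn_idPr le_BA).
- by move=> S PS; exists S.
Qed.

End MinCard.

Section DoublyResolvingExtension.
Variables (T : finType) (e : rel T) (S D : {set T}).
Hypothesis S_res : resolving e S.

Definition one_step_behind (x y : T) : bool :=
  [forall u in S, dist e u x == (dist e u y).+1].

Lemma one_step_behind_inj x x' y :
  one_step_behind x y -> one_step_behind x' y -> x = x'.
Proof.
move=> /forall_inP bx /forall_inP bx'; apply/eqP/negPn/negP => nxx'.
move/forallP/(_ x)/forallP/(_ x')/implyP: S_res => /(_ nxx') /exists_inP [u uS].
by rewrite (eqP (bx u uS)) (eqP (bx' u uS)) eqxx.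
Qed.

Definition behind_set : {set T} :=
  [set x | [exists y in S :&: D, e x y && one_step_behind x y]].

Lemma card_behind_set : #|behind_set| <= #|S :&: D|.
Proof.
pose f x := odflt x [pick y in S :&: D | e x y && one_step_behind x y].
have fP x : x \in behind_set ->
    (f x \in S :&: D) && (e x (f x) && one_step_behind x (f x)).
  rewrite inE /f; case: pickP => [y /andP [-> ->] //|none].
  by case/exists_inP => y yS xy; move: (none y); rewrite yS xy.
rewrite -(@card_in_imset _ _ f behind_set).
  apply/subset_leq_card/subsetP => _ /imsetP [x xX ->].
  by case/andP: (fP x xX).
move=> x x' xX x'X fxx'; apply: (@one_step_behind_inj x x' (f x)).
  by case/and3P: (fP x xX).
by rewrite fxx'; case/and3P: (fP x' x'X).
Qed.

Definition extension : {set T} := S :|: D :|: behind_set.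

Lemma card_extension : #|extension| <= #|S| + #|D|.
Proof.
have := cardsUI (S :|: D) behind_set; have := cardsUI S D.
have := card_behind_set; rewrite /extension; lia.
Qed.

Lemma subset_extension_S : S \subset extension.
Proof. by rewrite /extension -setUA subsetUl. Qed.

Lemma subset_extension_D : D \subset extension.
Proof. by rewrite /extension (setUC S) -setUA subsetUl. Qed.

Lemma subset_extension_behind : behind_set \subset extension.
Proof. exact: subsetUr. Qed.

Hypothesis e_sym : symmetric e.
Hypotheses (S_dom : dominating e S) (D_dom : dominating e D).

Lemma extension_no_uniform_gap x y c : 0 < c ->
  {in extension, forall u, dist e u x = dist e u y + c} -> False.
Proof.
move=> c_gt0 gap.
have xW : x \notin extension.
  by apply/negP => /gap; rewrite dist_xx; lia.
have nbr w : w \in extension -> e x w -> w = y /\ c = 1.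
  move=> wW xw; have wx : w != x by apply: contraNneq xW => <-.
  have wx_edge : e w x by rewrite e_sym.
  have := gap w wW; rewrite (dist_edge wx wx_edge) => dist_w.
  by split; [apply: (@dist_eq0 _ e) | ]; lia.
have xS : x \notin S by apply: contra xW; apply/subsetP/subset_extension_S.
have xD : x \notin D by apply: contra xW; apply/subsetP/subset_extension_D.
move/forallP/(_ x)/implyP: S_dom => /(_ xS) /exists_inP [s sS xs].
have sW : s \in extension by apply: (subsetP subset_extension_S).
have [ys c1] := nbr s sW xs; subst s c.
have xy : one_step_behind x y.
  apply/forall_inP => u uS; rewrite gap ?addn1 //.
  exact: (subsetP subset_extension_S).
move/forallP/(_ x)/implyP: D_dom => /(_ xD) /exists_inP [w wD xw].
have [wy _] := nbr w (subsetP subset_extension_D w wD) xw; subst w.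
apply: (negP xW); apply: (subsetP subset_extension_behind); rewrite inE.
by apply/exists_inP; exists y; rewrite ?inE ?sS ?wD ?xw.
Qed.

Lemma extension_doubly_resolving : doubly_resolving e extension.
Proof.
apply/forallP => x; apply/forallP => y; apply/implyP => nxy.
apply: contraT => not_resolved; exfalso.
have balance u v : u \in extension -> v \in extension ->
    dist e u x + dist e v y = dist e v x + dist e u y.
  move=> uW vW; apply/eqP/negPn/negP => ne; apply: (negP not_resolved).
  apply/exists_inP; exists u => //; apply/exists_inP; exists v => //.
  by apply: contra ne => /eqP eq_diff; apply/eqP; lia.
move/forallP/(_ x)/forallP/(_ y)/implyP: S_res => /(_ nxy) /exists_inP [u0 u0S ne].
have u0W : u0 \in extension by apply: (subsetP subset_extension_S).
case: (ltngtP (dist e u0 x) (dist e u0 y)) => [lt|lt|eq]; last by rewrite eq eqxx in ne.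
- apply: (@extension_no_uniform_gap y x (dist e u0 y - dist e u0 x)).
    by rewrite subn_gt0.
  by move=> u uW; have := balance u u0 uW u0W; lia.
- apply: (@extension_no_uniform_gap x y (dist e u0 x - dist e u0 y)).
    by rewrite subn_gt0.
  by move=> u uW; have := balance u u0 uW u0W; lia.
Qed.

End DoublyResolvingExtension.

Theorem theorem12 (T : finType) (e : rel T) :
  simple_graph e -> connected_graph e -> 2 <= #|T| ->
  doubly_resolving_number e <= mld_number e + domination_number e.
Proof.
move=> [_ e_sym] _ _.
rewrite /doubly_resolving_number /mld_number /domination_number.
have mldT : mld_set e [set: T] by rewrite /mld_set resolving_setT dominating_setT.
have [S /andP [S_res S_dom] ->] := min_card_attained mldT.
have [D D_dom ->] := min_card_attained (dominating_setT e).
apply: leq_trans (@card_extension _ _ S D S_res).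
exact/min_card_le/extension_doubly_resolving.
Qed.
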